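(* Let $d=2$ and use polar coordinates $(r,\phi)$, $x^1=r\cos\phi$, $x^2=r\sin\phi$. Let $\Lambda\subset\mathbb{R}^2$ be bounded, the closure of an open connected set with piecewise smooth boundary, not containing the origin, and contained in the annulus $\{x:0<R_1<|x|<R_2<\infty\}$. Let $U$ be a smooth function on $(0,\infty)$ and $F(x)=-U'(|x|)\frac{x}{|x|}$. For $x\in\Lambda$ let $y(t,x)$ solve $\frac{d^2y}{dt^2}=F(y)$, $y(0,x)=x$, with initial velocity such that, writing $r(t,x),\phi(t,x)$ for the polar coordinates of $y(t,x)$, $$\frac{dr(0,x)}{dt}=g(|x|)>0,\qquad \frac{d\phi(0,x)}{dt}=h(|x|)$$ for some functions $g,h$ of $|x|$ only. Let $M(r)=r^2h(r)$ and assume that for all $r_2\ge r_1>R_1$, $$-U'(r_2)+\frac{M^2(r_1)}{r_2^3}\ge0.$$ Define $E_0(r)=\frac12g^2(r)+U(r)+\frac12r^2h^2(r)$ and $V(z,r)=U(z)+\frac{r^4h^2(r)}{2z^2}$. If for all $R_1<r_1<R_2$ and all $r_2>r_1$ $$\int_{r_1}^{r_2}\frac{d}{dr_1}\frac{1}{\sqrt{2(E_0(r_1)-V(z,r_1))}}\,dz<\frac{1}{g(r_1)},$$ then there are no collisions: $y(t,x_1)\ne y(t,x_2)$ for all $t\ge0$ and all $x_1\ne x_2$ in $\Lambda$.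
   Context: Each point of $\Lambda$ is a non-interacting unit-mass point particle moving in the central field $F$. *)

From Stdlib Require Import Reals List.
From Coquelicot Require Import Coquelicot.
Open Scope R_scope.

Definition pt := (R * R)%type.

Definition enorm (p : pt) : R := sqrt (fst p ^ 2 + snd p ^ 2).

Definition Ffield (U : R -> R) (p : pt) : pt :=
  (- Derive U (enorm p) * fst p / enorm p, - Derive U (enorm p) * snd p / enorm p).

Definition smooth_pos (U : R -> R) : Prop :=
  forall (n : nat) (r : R), 0 < r -> ex_derive_n U n r.

Definition smooth_curve (c : R -> pt) : Prop :=
  forall (n : nat) (t : R),
    ex_derive_n (fun s => fst (c s)) n t /\ ex_derive_n (fun s => snd (c s)) n t.

Definition closure2 (S : pt -> Prop) (x : pt) : Prop :=
  forall eps : R, 0 < eps -> exists y, S y /\ enorm (fst y - fst x, snd y - snd x) < eps.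

Definition boundary2 (S : pt -> Prop) (x : pt) : Prop :=
  closure2 S x /\ closure2 (fun y => ~ S y) x.

Definition connected2 (S : pt -> Prop) : Prop :=
  ~ exists A B : pt -> Prop, open A /\ open B /\
      (forall x, S x -> A x \/ B x) /\
      (exists x, S x /\ A x) /\ (exists x, S x /\ B x) /\
      (forall x, ~ (S x /\ A x /\ B x)).

Definition bounded2 (S : pt -> Prop) : Prop :=
  exists C : R, forall x, S x -> enorm x <= C.

Definition piecewise_smooth_boundary (S : pt -> Prop) : Prop :=
  exists cs : list (R -> pt),
    (forall c, In c cs -> smooth_curve c) /\
    (forall x, boundary2 S x <-> exists c, In c cs /\ exists s, 0 <= s <= 1 /\ c s = x).

Definition admissible_domain (L : pt -> Prop) : Prop :=
  (exists O : pt -> Prop, open O /\ connected2 O /\ (forall x, L x <-> closure2 O x)) /\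
  piecewise_smooth_boundary L.

(* y solves y'' = F(y) on [0, +oo) with y(0) = x and y'(0) = v(0);
   the derivatives on (0,+oo) are two-sided, and y, y' are right-continuous at 0 *)
Definition solves_newton (U : R -> R) (y v : R -> pt) (x : pt) : Prop :=
  y 0 = x /\
  (forall t, 0 <= t -> y t <> (0, 0)) /\
  (forall t, 0 < t -> is_derive y t (v t) /\ is_derive v t (Ffield U (y t))) /\
  filterlim y (at_right 0) (locally (y 0)) /\
  filterlim v (at_right 0) (locally (v 0)).

(* polar coordinates derivatives at a point p with velocity w:
   dr/dt = (p . w)/|p|,  dphi/dt = (p^1 w^2 - p^2 w^1)/|p|^2 *)
Definition radial_vel (p w : pt) : R := (fst p * fst w + snd p * snd w) / enorm p.
Definition angular_vel (p w : pt) : R := (fst p * snd w - snd p * fst w) / (enorm p ^ 2).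

Definition Mfun (h : R -> R) (r : R) : R := r ^ 2 * h r.
Definition E0 (U g h : R -> R) (r : R) : R := / 2 * g r ^ 2 + U r + / 2 * r ^ 2 * h r ^ 2.
Definition Vfun (U h : R -> R) (z r : R) : R := U z + r ^ 4 * h r ^ 2 / (2 * z ^ 2).

Definition integrand (U g h : R -> R) (z r1 : R) : R :=
  / sqrt (2 * (E0 U g h r1 - Vfun U h z r1)).

(* Along each trajectory the angular momentum [M = r0^2 h(r0)] and the energy
   [E0(r0)] are conserved, so at radius [r] the squared radial speed is
   [2 (E0(r0) - V(r, r0))].  The hypothesis [-U'(r) + M^2 / r^3 >= 0] makes this
   quantity increase with [r]; hence the radial velocity never vanishes, the
   radius grows, and the particle launched at radius [r0] reaches radius [z]
   exactly at time [T(r0, z) = int_{r0}^{z} dw / sqrt (2 (E0(r0) - V(w, r0)))].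
   Differentiating under the integral sign gives
   [dT/dr0 = - 1 / g(r0) + int_{r0}^{z} d/dr0 (...)], which the integral
   hypothesis makes negative on the interval of initial radii (an interval by
   connectedness of [Lambda]); so particles launched on different circles reach
   a given radius at different times.  Particles launched on the same circle have
   equal radii, radial velocities and angular momenta at all times, so the angle
   between them is constant and they meet only if they start at the same point. *)

From Stdlib Require Import Reals Lra Classical.
From Coquelicot Require Import Coquelicot.
Open Scope R_scope.

Lemma is_derive_eq (f : R -> R) (x l l' : R) : is_derive f x l -> l = l' -> is_derive f x l'.
Proof. intros Hf <-. exact Hf. Qed.

Lemma is_derive_Rplus (f g : R -> R) (x df dg : R) :
  is_derive f x df -> is_derive g x dg -> is_derive (fun t => f t + g t) x (df + dg).
Proof. intros Hf Hg. apply (is_derive_plus f g); assumption. Qed.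

Lemma is_derive_Rminus (f g : R -> R) (x df dg : R) :
  is_derive f x df -> is_derive g x dg -> is_derive (fun t => f t - g t) x (df - dg).
Proof. intros Hf Hg. apply (is_derive_minus f g); assumption. Qed.

Lemma is_derive_Rmult (f g : R -> R) (x df dg : R) :
  is_derive f x df -> is_derive g x dg ->
  is_derive (fun t => f t * g t) x (df * g x + f x * dg).
Proof. intros Hf Hg. apply (is_derive_mult f g); auto. apply Rmult_comm. Qed.

Lemma is_derive_Rcomp (f g : R -> R) (x df dg : R) :
  is_derive f (g x) df -> is_derive g x dg -> is_derive (fun t => f (g t)) x (dg * df).
Proof. intros Hf Hg. apply (is_derive_comp f g); assumption. Qed.

Lemma is_derive_fst (Y : R -> pt) (t : R) (w : pt) :
  is_derive Y t w -> is_derive (fun s => fst (Y s)) t (fst w).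
Proof.
  intros HY. eapply filterdiff_ext_lin.
  - apply (filterdiff_comp' Y fst t _ fst HY). apply filterdiff_linear, is_linear_fst.
  - reflexivity.
Qed.

Lemma is_derive_snd (Y : R -> pt) (t : R) (w : pt) :
  is_derive Y t w -> is_derive (fun s => snd (Y s)) t (snd w).
Proof.
  intros HY. eapply filterdiff_ext_lin.
  - apply (filterdiff_comp' Y snd t _ snd HY). apply filterdiff_linear, is_linear_snd.
  - reflexivity.
Qed.

Section FilterlimR.

Context {T : Type} {F : (T -> Prop) -> Prop} {FF : Filter F}.

Lemma filterlim_Rplus (f g : T -> R) (a b : R) :
  filterlim f F (locally a) -> filterlim g F (locally b) ->
  filterlim (fun s => f s + g s) F (locally (a + b)).
Proof.
  intros Hf Hg. apply (filterlim_comp_2 f g Rplus Hf Hg).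
  apply (@filterlim_plus R_AbsRing R_NormedModule).
Qed.

Lemma filterlim_Rmult (f g : T -> R) (a b : R) :
  filterlim f F (locally a) -> filterlim g F (locally b) ->
  filterlim (fun s => f s * g s) F (locally (a * b)).
Proof.
  intros Hf Hg. apply (filterlim_comp_2 f g Rmult Hf Hg). apply (@filterlim_mult R_AbsRing).
Qed.

Lemma filterlim_Rcomp (f : T -> R) (h : R -> R) (a : R) :
  filterlim f F (locally a) -> continuous h a ->
  filterlim (fun s => h (f s)) F (locally (h a)).
Proof. intros Hf Hh. exact (filterlim_comp _ _ _ f h F _ _ Hf Hh). Qed.

Lemma filterlim_Rminus (f g : T -> R) (a b : R) :
  filterlim f F (locally a) -> filterlim g F (locally b) ->
  filterlim (fun s => f s - g s) F (locally (a - b)).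
Proof.
  intros Hf Hg. apply filterlim_Rplus; auto.
  eapply filterlim_comp; [exact Hg|]. apply (filterlim_opp b).
Qed.

Lemma filterlim_Rsqr (f : T -> R) (a : R) :
  filterlim f F (locally a) -> filterlim (fun s => f s ^ 2) F (locally (a ^ 2)).
Proof.
  intros Hf. apply (filterlim_comp _ _ _ f (fun x => x ^ 2) F _ _ Hf).
  apply (ex_derive_continuous (fun x : R => x ^ 2)). auto_derive; auto.
Qed.

Lemma filterlim_Rfst (Y : T -> pt) (p : pt) :
  filterlim Y F (locally p) -> filterlim (fun s => fst (Y s)) F (locally (fst p)).
Proof. destruct p as [p1 p2]. intros HY. eapply filterlim_comp; [exact HY|]. apply continuous_fst. Qed.

Lemma filterlim_Rsnd (Y : T -> pt) (p : pt) :
  filterlim Y F (locally p) -> filterlim (fun s => snd (Y s)) F (locally (snd p)).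
Proof. destruct p as [p1 p2]. intros HY. eapply filterlim_comp; [exact HY|]. apply continuous_snd. Qed.

End FilterlimR.

Ltac solve_filterlim :=
  repeat match goal with
  | |- filterlim (fun _ => _ - _) _ _ => apply filterlim_Rminus
  | |- filterlim (fun _ => _ + _) _ _ => apply filterlim_Rplus
  | |- filterlim (fun _ => _ * _) _ _ => apply filterlim_Rmult
  | |- filterlim (fun _ => _ ^ 2) _ _ => apply filterlim_Rsqr
  | |- filterlim (fun _ => fst _) _ _ => apply filterlim_Rfst
  | |- filterlim (fun _ => snd _) _ _ => apply filterlim_Rsnd
  | |- filterlim (fun _ => _) _ _ => apply filterlim_const
  | H : filterlim ?Y ?F ?l |- filterlim ?Y ?F ?l => exact H
  end.

Lemma filterlim_at_right_id (x : R) : filterlim (fun t => t) (at_right x) (locally x).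
Proof. intros P [e He]. exists e. intros y Hy _. apply He, Hy. Qed.

Lemma locally_R (m : R) (P : R -> Prop) :
  locally m P -> exists d, 0 < d /\ forall u, Rabs (u - m) < d -> P u.
Proof.
  intros [d Hd]. exists d. split; [apply cond_pos|]. intros u Hu. apply Hd. exact Hu.
Qed.

Lemma filterlim_locally_pos {T} (F : (T -> Prop) -> Prop) (f : T -> R) (l : R) :
  filterlim f F (locally l) -> 0 < l -> F (fun u => 0 < f u).
Proof. intros Hf Hl. apply (Hf (fun y => 0 < y)), (open_gt 0 l Hl). Qed.

Lemma filterlim_locally_neg {T} (F : (T -> Prop) -> Prop) (f : T -> R) (l : R) :
  filterlim f F (locally l) -> l < 0 -> F (fun u => f u < 0).
Proof. intros Hf Hl. apply (Hf (fun y => y < 0)), (open_lt 0 l Hl). Qed.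

Lemma ex_derive_continuous_R (f : R -> R) (x : R) : ex_derive f x -> continuous f x.
Proof. apply (@ex_derive_continuous R_AbsRing R_NormedModule). Qed.

Lemma continuous_R_eps (f : R -> R) (m : R) : continuous f m ->
  forall e, 0 < e -> exists d, 0 < d /\ forall u, Rabs (u - m) < d -> Rabs (f u - f m) < e.
Proof.
  intros Hf e He.
  destruct (proj1 (filterlim_locally f (f m)) Hf (mkposreal e He)) as [d Hd].
  exists d. split; [apply cond_pos|]. intros u Hu. apply (Hd u Hu).
Qed.

Lemma exists_pos_le4 (a b c d : R) : 0 < a -> 0 < b -> 0 < c -> 0 < d ->
  exists m, 0 < m /\ m <= a /\ m <= b /\ m <= c /\ m <= d.
Proof.
  intros Ha Hb Hc Hd. exists (Rmin (Rmin a b) (Rmin c d)).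
  pose proof (Rmin_l (Rmin a b) (Rmin c d)). pose proof (Rmin_r (Rmin a b) (Rmin c d)).
  pose proof (Rmin_l a b). pose proof (Rmin_r a b). pose proof (Rmin_l c d). pose proof (Rmin_r c d).
  split; [repeat apply Rmin_pos; assumption|lra].
Qed.

Section NonnegativeTimes.

Variables f df : R -> R.
Hypothesis f_derive : forall t, 0 < t -> is_derive f t (df t).
Hypothesis f_right_cont : filterlim f (at_right 0) (locally (f 0)).

Lemma MVT_nonneg (a b : R) : 0 <= a < b ->
  exists c, 0 < c /\ a <= c <= b /\ f b - f a = df c * (b - a).
Proof.
  intros Hab.
  destruct (C0_extension_left f (f 0) 0 (b + 1)) as [g [Hg_cont [Hg_f Hg0]]].
  - lra.
  - intros c Hc. apply ex_derive_continuous_R. eexists. apply f_derive. lra.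
  - exact f_right_cont.
  - assert (Hfg : forall t, 0 <= t -> g t = f t).
    { intros t Ht. destruct (Req_dec t 0) as [->|Hn]; [exact Hg0|]. apply Hg_f. lra. }
    (* [MVT_gen] may return the point [0], where [df] says nothing about [f]. *)
    set (df' := fun t => if Rlt_dec 0 t then df t else df b).
    destruct (MVT_gen g a b df') as [c [Hc HMVT]].
    + rewrite Rmin_left, Rmax_right by lra. intros t Ht.
      unfold df'. destruct (Rlt_dec 0 t); [|lra].
      apply is_derive_ext_loc with f; [|apply f_derive; lra].
      apply filter_imp with (2 := open_gt 0 t ltac:(lra)).
      intros u Hu. symmetry. apply Hfg. lra.
    + rewrite Rmin_left, Rmax_right by lra. intros t Ht.
      apply continuity_pt_filterlim, Hg_cont. lra.
    + rewrite Rmin_left, Rmax_right in Hc by lra. rewrite !Hfg in HMVT by lra.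
      unfold df' in HMVT. destruct (Rlt_dec 0 c).
      * exists c. repeat split; lra.
      * exists b. repeat split; lra.
Qed.

Lemma const_nonneg : (forall t, 0 < t -> df t = 0) -> forall t, 0 <= t -> f t = f 0.
Proof.
  intros Hdf t Ht. destruct (Req_dec t 0) as [->|Hn]; [reflexivity|].
  destruct (MVT_nonneg 0 t ltac:(lra)) as [c [Hc [_ HMVT]]].
  rewrite Hdf in HMVT by exact Hc. lra.
Qed.

Lemma increasing_nonneg : (forall t, 0 < t -> 0 < df t) -> forall a b, 0 <= a < b -> f a < f b.
Proof.
  intros Hdf a b Hab.
  destruct (MVT_nonneg a b Hab) as [c [Hc [_ HMVT]]].
  specialize (Hdf c Hc). nra.
Qed.

End NonnegativeTimes.

(* The supremum of the times up to which [f] stays positive cannot be finite. *)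
Lemma positive_nonneg (f : R -> R) :
  (forall t, 0 < t -> continuous f t) -> filterlim f (at_right 0) (locally (f 0)) -> 0 < f 0 ->
  (forall t, 0 < t -> (forall u, 0 <= u < t -> 0 < f u) -> f t <> 0) ->
  forall t, 0 <= t -> 0 < f t.
Proof.
  intros Hcont Hrc Hf0 Hzero t0 Ht0. apply NNPP. intros Hneg.
  set (E := fun tau => 0 <= tau /\ forall u, 0 <= u <= tau -> 0 < f u).
  assert (HE0 : E 0) by (split; [lra|]; intros u Hu; replace u with 0 by lra; exact Hf0).
  destruct (completeness E) as [m [Hub Hlub]].
  { exists t0. intros tau [Htau Hpos]. destruct (Rle_or_lt tau t0) as [|Hlt]; [assumption|].
    exfalso. apply Hneg, Hpos. lra. }
  { exists 0. exact HE0. }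
  assert (Hm0 : 0 <= m) by (apply Hub, HE0).
  assert (Hbefore : forall u, 0 <= u < m -> 0 < f u).
  { intros u Hu. apply NNPP. intros Hfu.
    assert (m <= u); [|lra].
    apply Hlub. intros tau [Htau Hpos]. destruct (Rle_or_lt tau u) as [|Hlt]; [assumption|].
    exfalso. apply Hfu, Hpos. lra. }
  assert (Hfm : 0 < f m).
  { destruct (Req_dec m 0) as [->|Hm]; [exact Hf0|].
    destruct (Rtotal_order (f m) 0) as [Hlt|[Heq|Hgt]];
      [|exfalso; apply (Hzero m); [lra|exact Hbefore|exact Heq]|exact Hgt].
    destruct (locally_R _ _ (filterlim_locally_neg _ _ _ (Hcont m ltac:(lra)) Hlt)) as [d [Hd Hnear]].
    set (u := m - Rmin d m / 2).
    assert (0 < Rmin d m) by (apply Rmin_pos; lra).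
    pose proof (Rmin_l d m). pose proof (Rmin_r d m).
    specialize (Hnear u ltac:(unfold u; rewrite Rabs_left; lra)).
    specialize (Hbefore u ltac:(unfold u; lra)). lra. }
  assert (Hafter : exists d, 0 < d /\ forall u, m <= u < m + d -> 0 < f u).
  { destruct (Req_dec m 0) as [->|Hm].
    - destruct (locally_R _ _ (filterlim_locally_pos _ _ _ Hrc Hf0)) as [d [Hd Hnear]].
      exists d. split; [exact Hd|]. intros u Hu.
      destruct (Req_dec u 0) as [->|Hu0]; [exact Hf0|].
      apply Hnear; [rewrite Rminus_0_r, Rabs_right|]; lra.
    - destruct (locally_R _ _ (filterlim_locally_pos _ _ _ (Hcont m ltac:(lra)) Hfm)) as [d [Hd Hnear]].
      exists d. split; [exact Hd|]. intros u Hu. apply Hnear. rewrite Rabs_right; lra. }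
  destruct Hafter as [d [Hd Hafter]].
  assert (m + d / 2 <= m); [|lra].
  apply Hub. split; [lra|]. intros u Hu.
  destruct (Rlt_or_le u m); [apply Hbefore|apply Hafter]; lra.
Qed.





(** * Differentiation under the integral sign *)

Lemma abs_RInt_le_const_R (f : R -> R) (a b M : R) : ex_RInt f a b ->
  (forall t, Rmin a b <= t <= Rmax a b -> Rabs (f t) <= M) ->
  Rabs (RInt f a b) <= Rabs (b - a) * M.
Proof.
  intros Hf HM. destruct (Rle_or_lt a b) as [Hab|Hab].
  - rewrite (Rabs_right (b - a)) by lra. apply abs_RInt_le_const; [exact Hab|exact Hf|].
    intros t Ht. apply HM. rewrite Rmin_left, Rmax_right; lra.
  - assert (Hf' : ex_RInt f b a) by (apply ex_RInt_swap, Hf).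
    rewrite <- (opp_RInt_swap f b a Hf'). change (Rabs (- RInt f b a) <= Rabs (b - a) * M).
    rewrite Rabs_Ropp, (Rabs_left (b - a)), Ropp_minus_distr by lra.
    apply abs_RInt_le_const; [lra|exact Hf'|].
    intros t Ht. apply HM. rewrite Rmin_right, Rmax_left; lra.
Qed.

Lemma ex_RInt_continuous_R (f : R -> R) (a b : R) :
  (forall w, Rmin a b <= w <= Rmax a b -> continuous f w) -> ex_RInt f a b.
Proof. apply (@ex_RInt_continuous R_CompleteNormedModule). Qed.

Lemma ex_RInt_continuous_between (f : R -> R) (m M a b : R) :
  (forall w, m <= w <= M -> continuous f w) -> m <= a <= M -> m <= b <= M -> ex_RInt f a b.
Proof.
  intros Hf Ha Hb. apply ex_RInt_continuous_R. intros w Hw. apply Hf. split.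
  - apply Rle_trans with (Rmin a b); [apply Rmin_glb|]; lra.
  - apply Rle_trans with (Rmax a b); [|apply Rmax_lub]; lra.
Qed.

Lemma Rabs_sub_le_between (a b w : R) : Rmin a b <= w <= Rmax a b -> Rabs (w - a) <= Rabs (b - a).
Proof.
  intros Hw. destruct (Rle_dec a b) as [Hab|Hab].
  - rewrite Rmin_left, Rmax_right in Hw by lra. rewrite !Rabs_right by lra. lra.
  - rewrite Rmin_right, Rmax_left in Hw by lra. rewrite !Rabs_left1 by lra. lra.
Qed.

Lemma ex_RInt_Rminus (f g : R -> R) (a b : R) :
  ex_RInt f a b -> ex_RInt g a b -> ex_RInt (fun x => f x - g x) a b.
Proof. apply (@ex_RInt_minus R_NormedModule). Qed.

Lemma RInt_Rminus (f g : R -> R) (a b : R) : ex_RInt f a b -> ex_RInt g a b ->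
  RInt (fun x => f x - g x) a b = RInt f a b - RInt g a b.
Proof. apply (@RInt_minus R_CompleteNormedModule). Qed.

Lemma RInt_Rscal (f : R -> R) (a b k : R) : ex_RInt f a b ->
  RInt (fun x => k * f x) a b = k * RInt f a b.
Proof. apply (@RInt_scal R_CompleteNormedModule). Qed.

Lemma RInt_param_lower_increment (phi : R -> R -> R) (D : R -> R) (s0 s z : R) :
  ex_RInt (fun w => phi w s) s0 s -> ex_RInt (fun w => phi w s) s z ->
  ex_RInt (fun w => phi w s) s0 z -> ex_RInt (fun w => phi w s0) s0 z -> ex_RInt D s0 z ->
  RInt (fun w => phi w s) s z - RInt (fun w => phi w s0) s0 z
    - (s - s0) * (- phi s0 s0 + RInt D s0 z)
  = RInt (fun w => phi w s - phi w s0 - (s - s0) * D w) s0 z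
    - RInt (fun w => phi w s - phi s0 s0) s0 s.
Proof.
  intros H1 H2 H3 H4 HD.
  assert (H34 : ex_RInt (fun w => phi w s - phi w s0) s0 z) by (apply ex_RInt_Rminus; assumption).
  assert (HsD : ex_RInt (fun w => (s - s0) * D w) s0 z)
    by apply (@ex_RInt_scal R_NormedModule D _ _ _ HD).
  assert (Hc : ex_RInt (fun _ => phi s0 s0) s0 s) by apply (@ex_RInt_const R_NormedModule).
  rewrite (RInt_Rminus _ _ _ _ H34 HsD), (RInt_Rminus _ _ _ _ H3 H4), (RInt_Rscal D _ _ _ HD),
    (RInt_Rminus _ _ _ _ H1 Hc), RInt_const,
    <- (RInt_Chasles (fun w => phi w s) s0 s z H1 H2).
  unfold plus, scal; simpl. unfold mult; simpl. ring.
Qed.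

Lemma Rabs_sub_div_lt (a b k eps : R) : k <> 0 -> 0 < eps ->
  Rabs a <= eps / 4 * Rabs k -> Rabs b <= eps / 4 * Rabs k -> Rabs ((a - b) / k) < eps.
Proof.
  intros Hk Heps Ha Hb. assert (Hk_pos : 0 < Rabs k) by (apply Rabs_pos_lt, Hk).
  unfold Rdiv. rewrite Rabs_mult, Rabs_inv.
  apply Rle_lt_trans with (eps / 2 * Rabs k * / Rabs k).
  - apply Rmult_le_compat_r; [left; apply Rinv_0_lt_compat, Hk_pos|].
    eapply Rle_trans; [apply Rabs_triang|]. rewrite Rabs_Ropp. lra.
  - replace (eps / 2 * Rabs k * / Rabs k) with (eps / 2) by (field; lra). lra.
Qed.

Lemma is_derive_RInt_param_lower (phi : R -> R -> R) (D : R -> R) (s0 z : R) :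
  s0 < z ->
  (exists d0, 0 < d0 /\ forall s, Rabs (s - s0) < d0 -> forall w, Rmin s s0 <= w <= z ->
      continuous (fun w => phi w s) w) ->
  (forall e, 0 < e -> exists d, 0 < d /\ forall s w, Rabs (s - s0) < d -> Rabs (w - s0) < d ->
      Rabs (phi w s - phi s0 s0) < e) ->
  (forall e, 0 < e -> exists d, 0 < d /\ forall s, Rabs (s - s0) < d -> forall w, s0 <= w <= z ->
      Rabs (phi w s - phi w s0 - (s - s0) * D w) <= e * Rabs (s - s0)) ->
  ex_RInt D s0 z ->
  is_derive (fun s => RInt (fun w => phi w s) s z) s0 (- phi s0 s0 + RInt D s0 z).
Proof.
  intros Hz [d0 [Hd0 Hcont]] Hjoint Hunif HD.
  apply is_derive_Reals. intros eps Heps.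
  destruct (Hjoint (eps / 4) ltac:(lra)) as [d1 [Hd1 Hjoint']].
  destruct (Hunif (eps / (4 * (z - s0))) ltac:(apply Rdiv_lt_0_compat; lra)) as [d2 [Hd2 Hunif']].
  destruct (exists_pos_le4 d0 (z - s0) d1 d2 Hd0 ltac:(lra) Hd1 Hd2) as [del [Hdel Hdel_le]].
  exists (mkposreal del Hdel). intros k Hk0 Hk. simpl in Hk.
  set (s := s0 + k).
  assert (Hsk : s - s0 = k) by (unfold s; ring).
  assert (Hs : Rabs (s - s0) < del) by (rewrite Hsk; exact Hk).
  assert (Hs' := Rabs_def2 _ _ Hs).
  assert (Hmin : Rmin s s0 <= s /\ Rmin s s0 <= s0) by (split; [apply Rmin_l|apply Rmin_r]).
  assert (Hex : forall a b, Rmin s s0 <= a <= z -> Rmin s s0 <= b <= z ->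
            ex_RInt (fun w => phi w s) a b)
    by (intros a b Ha Hb; apply (ex_RInt_continuous_between _ (Rmin s s0) z); [|lra|lra];
        intros w Hw; apply Hcont; lra).
  assert (Hex0 : ex_RInt (fun w => phi w s0) s0 z).
  { apply (ex_RInt_continuous_between _ s0 z); [|lra|lra]. intros w Hw.
    apply Hcont; [rewrite Rminus_diag, Rabs_R0; lra|rewrite Rmin_left; lra]. }
  pose proof (RInt_param_lower_increment phi D s0 s z (Hex s0 s ltac:(lra) ltac:(lra))
    (Hex s z ltac:(lra) ltac:(lra)) (Hex s0 z ltac:(lra) ltac:(lra)) Hex0 HD) as Hincr.
  set (I1 := RInt (fun w => phi w s - phi w s0 - (s - s0) * D w) s0 z) in Hincr.
  set (I2 := RInt (fun w => phi w s - phi s0 s0) s0 s) in Hincr.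
  assert (HI1 : Rabs I1 <= eps / 4 * Rabs k).
  { replace (eps / 4 * Rabs k) with (Rabs (z - s0) * (eps / (4 * (z - s0)) * Rabs (s - s0)))
      by (rewrite Hsk, Rabs_right by lra; field; lra).
    apply abs_RInt_le_const_R.
    - apply ex_RInt_Rminus; [apply ex_RInt_Rminus; [apply Hex; lra|exact Hex0]|].
      apply (@ex_RInt_scal R_NormedModule D _ _ _ HD).
    - rewrite Rmin_left, Rmax_right by lra. intros w Hw. apply Hunif'; [lra|exact Hw]. }
  assert (HI2 : Rabs I2 <= eps / 4 * Rabs k).
  { rewrite <- Hsk, Rmult_comm. apply abs_RInt_le_const_R.
    - apply ex_RInt_Rminus; [apply Hex; lra|apply (@ex_RInt_const R_NormedModule)].
    - intros w Hw. left. apply Hjoint'; [lra|].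
      eapply Rle_lt_trans; [apply Rabs_sub_le_between, Hw|lra]. }
  fold s. replace ((RInt (fun w => phi w s) s z - RInt (fun w => phi w s0) s0 z) / k
                   - (- phi s0 s0 + RInt D s0 z)) with ((I1 - I2) / k)
    by (rewrite <- Hincr, Hsk; field; exact Hk0).
  apply Rabs_sub_div_lt; assumption.
Qed.

Lemma is_derive_linear_approx (f : R -> R) (x l : R) : is_derive f x l ->
  forall eta, 0 < eta -> exists d, 0 < d /\ forall y, Rabs (y - x) < d ->
    Rabs (f y - f x - l * (y - x)) <= eta * Rabs (y - x).
Proof.
  intros Hf eta Heta. apply is_derive_Reals in Hf.
  destruct (Hf eta Heta) as [d Hd]. exists d. split; [apply cond_pos|].
  intros y Hy. destruct (Req_dec y x) as [->|Hn].
  - rewrite !Rminus_diag, Rmult_0_r, Rminus_0_r, Rabs_R0. lra.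
  - specialize (Hd (y - x) ltac:(lra) Hy). replace (x + (y - x)) with y in Hd by ring.
    replace (f y - f x - l * (y - x)) with (((f y - f x) / (y - x) - l) * (y - x)) by (field; lra).
    rewrite Rabs_mult. apply Rmult_le_compat_r; [apply Rabs_pos|lra].
Qed.

(* Near [s0], [/ sqrt (G s)] stays positive, which excludes the junk value
   [sqrt x = 0] for [x <= 0]; so there [G = / (/ sqrt G) ^ 2]. *)
Lemma ex_derive_of_inv_sqrt (G : R -> R) (s0 : R) :
  ex_derive (fun s => / sqrt (G s)) s0 -> 0 < G s0 -> ex_derive G s0.
Proof.
  intros [l Hl] HG.
  assert (Hpos : 0 < / sqrt (G s0)) by (apply Rinv_0_lt_compat, sqrt_lt_R0, HG).
  pose proof (filterlim_locally_pos _ _ _ (ex_derive_continuous_R _ _ (ex_intro _ l Hl)) Hpos)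
    as Hnear.
  exists (- (2 * l * / sqrt (G s0)) / ((/ sqrt (G s0)) ^ 2) ^ 2).
  apply (is_derive_ext_loc (fun s => / ((/ sqrt (G s)) ^ 2))).
  - apply filter_imp with (2 := Hnear). intros s Hs.
    destruct (Rle_or_lt (G s) 0) as [Hle|Hlt].
    + rewrite sqrt_neg_0, Rinv_0 in Hs by exact Hle. lra.
    + rewrite pow_inv, Rinv_inv. apply pow2_sqrt. lra.
  - eapply is_derive_eq.
    + apply (is_derive_inv (fun s => (/ sqrt (G s)) ^ 2)); [|apply pow_nonzero; lra].
      apply (is_derive_pow (fun s => / sqrt (G s)) 2 s0 l Hl).
    + assert (0 < sqrt (G s0)) by (apply sqrt_lt_R0, HG). simpl. field. lra.
Qed.

Lemma is_derive_inv_sqrt (x : R) : 0 < x ->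
  is_derive (fun x => / sqrt x) x (- / 2 * (/ sqrt x) ^ 3).
Proof.
  intros Hx. assert (0 < sqrt x) by (apply sqrt_lt_R0, Hx).
  auto_derive; [repeat split; lra|]. field. lra.
Qed.

Lemma Rinv_taylor_sq (p p0 r : R) : 0 < r -> r <= p -> r <= p0 ->
  Rabs (/ p - / p0 + / 2 * (/ p0) ^ 3 * (p ^ 2 - p0 ^ 2)) <= (p ^ 2 - p0 ^ 2) ^ 2 / r ^ 5.
Proof.
  intros Hr Hp Hp0.
  replace (/ p - / p0 + / 2 * (/ p0) ^ 3 * (p ^ 2 - p0 ^ 2)) with
    ((p - p0) ^ 2 * ((p + 2 * p0) / (2 * p * p0 ^ 3))) by (field; lra).
  replace ((p ^ 2 - p0 ^ 2) ^ 2 / r ^ 5) with ((p - p0) ^ 2 * ((p + p0) ^ 2 / r ^ 5))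
    by (field; lra).
  assert (0 < p * p0 ^ 3) by (apply Rmult_lt_0_compat; [lra|apply pow_lt; lra]).
  rewrite Rabs_right by (apply Rle_ge, Rmult_le_pos; [apply pow2_ge_0|];
    apply Rle_mult_inv_pos; lra).
  apply Rmult_le_compat_l; [apply pow2_ge_0|].
  apply Rle_trans with ((p + p0) ^ 2 / (p * p0 ^ 4)).
  - apply Rmult_le_reg_r with (2 * p * p0 ^ 4); [apply Rmult_lt_0_compat; [lra|apply pow_lt; lra]|].
    replace ((p + 2 * p0) / (2 * p * p0 ^ 3) * (2 * p * p0 ^ 4)) with ((p + 2 * p0) * p0)
      by (field; lra).
    replace ((p + p0) ^ 2 / (p * p0 ^ 4) * (2 * p * p0 ^ 4)) with (2 * (p + p0) ^ 2)
      by (field; lra).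
    nra.
  - unfold Rdiv. apply Rmult_le_compat_l; [apply pow2_ge_0|].
    apply Rinv_le_contravar; [apply pow_lt; lra|].
    replace (r ^ 5) with (r * r ^ 4) by ring.
    apply Rmult_le_compat; [lra|apply pow_le; lra|lra|apply pow_incr; lra].
Qed.

Lemma inv_sqrt_taylor (x x0 c : R) : 0 < c -> c <= x -> c <= x0 ->
  Rabs (/ sqrt x - / sqrt x0 + / 2 * (/ sqrt x0) ^ 3 * (x - x0)) <= (x - x0) ^ 2 / sqrt c ^ 5.
Proof.
  intros Hc Hx Hx0.
  replace (x - x0) with (sqrt x ^ 2 - sqrt x0 ^ 2) by (rewrite !pow2_sqrt by lra; ring).
  apply Rinv_taylor_sq; [apply sqrt_lt_R0; lra|apply sqrt_le_1_alt; lra|apply sqrt_le_1_alt; lra].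
Qed.

Lemma inv_sqrt_linear_approx (x x0 c C k D eta : R) :
  0 < c -> c <= x -> c <= x0 ->
  Rabs (x - x0) <= C * Rabs k -> Rabs (x - x0 - k * D) <= eta * Rabs k ->
  Rabs (/ sqrt x - / sqrt x0 - k * (- / 2 * (/ sqrt x0) ^ 3 * D))
    <= (C ^ 2 * Rabs k / sqrt c ^ 5 + / 2 * (/ sqrt c) ^ 3 * eta) * Rabs k.
Proof.
  intros Hc Hx Hx0 HC Heta.
  pose proof (inv_sqrt_taylor x x0 c Hc Hx Hx0) as Htaylor.
  assert (Hsc : 0 < sqrt c) by (apply sqrt_lt_R0, Hc).
  assert (Hinv : 0 < / sqrt x0 <= / sqrt c).
  { split; [apply Rinv_0_lt_compat, sqrt_lt_R0; lra|].
    apply Rinv_le_contravar; [exact Hsc|apply sqrt_le_1_alt, Hx0]. }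
  replace (/ sqrt x - / sqrt x0 - k * (- / 2 * (/ sqrt x0) ^ 3 * D)) with
    ((/ sqrt x - / sqrt x0 + / 2 * (/ sqrt x0) ^ 3 * (x - x0))
      - / 2 * (/ sqrt x0) ^ 3 * (x - x0 - k * D)) by ring.
  eapply Rle_trans; [apply Rabs_triang|]. rewrite Rabs_Ropp, Rmult_plus_distr_r.
  apply Rplus_le_compat.
  - eapply Rle_trans; [exact Htaylor|].
    assert (Hsq : (x - x0) ^ 2 <= C ^ 2 * Rabs k ^ 2).
    { rewrite <- pow2_abs. replace (C ^ 2 * Rabs k ^ 2) with ((C * Rabs k) ^ 2) by ring.
      apply pow_incr. split; [apply Rabs_pos|exact HC]. }
    unfold Rdiv. replace (C ^ 2 * Rabs k * / sqrt c ^ 5 * Rabs k)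
      with (C ^ 2 * Rabs k ^ 2 * / sqrt c ^ 5) by ring.
    apply Rmult_le_compat_r; [left; apply Rinv_0_lt_compat, pow_lt, Hsc|exact Hsq].
  - rewrite !Rabs_mult, (Rabs_right (/ 2)), (Rabs_right ((/ sqrt x0) ^ 3))
      by (apply Rle_ge; try apply pow_le; lra).
    apply Rle_trans with (/ 2 * (/ sqrt c) ^ 3 * (eta * Rabs k)); [|right; ring].
    apply Rmult_le_compat; [apply Rmult_le_pos; [lra|apply pow_le; lra]|apply Rabs_pos| |exact Heta].
    apply Rmult_le_compat_l; [lra|apply pow_incr; lra].
Qed.

Definition dot (p q : pt) : R := fst p * fst q + snd p * snd q.
Definition cross (p q : pt) : R := fst p * snd q - snd p * fst q.

Lemma dot_self_pos (p : pt) : p <> (0, 0) -> 0 < dot p p.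
Proof.
  destruct p as [a b]. unfold dot; simpl. intros Hp.
  destruct (Req_dec a 0) as [->|Ha]; [destruct (Req_dec b 0) as [->|Hb]|]; [congruence|nra|nra].
Qed.
Lemma enorm_dot (p : pt) : enorm p = sqrt (dot p p).
Proof. unfold enorm, dot. f_equal. ring. Qed.

Lemma enorm_sq (p : pt) : enorm p ^ 2 = dot p p.
Proof. rewrite enorm_dot, pow2_sqrt; [reflexivity|]. unfold dot. nra. Qed.

Lemma enorm_pos (p : pt) : p <> (0, 0) -> 0 < enorm p.
Proof. intros Hp. apply sqrt_lt_R0. pose proof (dot_self_pos p Hp). unfold dot in *. nra. Qed.

Lemma dot_cross_sq (p q : pt) : dot p q ^ 2 + cross p q ^ 2 = dot p p * dot q q.
Proof. unfold dot, cross. ring. Qed.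

Lemma is_derive_dot (P Q : R -> pt) (t : R) (dP dQ : pt) :
  is_derive P t dP -> is_derive Q t dQ ->
  is_derive (fun s => dot (P s) (Q s)) t (dot dP (Q t) + dot (P t) dQ).
Proof.
  intros HP HQ. unfold dot. eapply is_derive_eq.
  - apply (is_derive_Rplus (fun s => fst (P s) * fst (Q s)) (fun s => snd (P s) * snd (Q s)));
      apply is_derive_Rmult;
      first [exact (is_derive_fst _ _ _ HP) | exact (is_derive_fst _ _ _ HQ)
            | exact (is_derive_snd _ _ _ HP) | exact (is_derive_snd _ _ _ HQ)].
  - simpl. ring.
Qed.

Lemma is_derive_cross (P Q : R -> pt) (t : R) (dP dQ : pt) :
  is_derive P t dP -> is_derive Q t dQ ->
  is_derive (fun s => cross (P s) (Q s)) t (cross dP (Q t) + cross (P t) dQ).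
Proof.
  intros HP HQ. unfold cross. eapply is_derive_eq.
  - apply (is_derive_Rminus (fun s => fst (P s) * snd (Q s)) (fun s => snd (P s) * fst (Q s)));
      apply is_derive_Rmult;
      first [exact (is_derive_fst _ _ _ HP) | exact (is_derive_fst _ _ _ HQ)
            | exact (is_derive_snd _ _ _ HP) | exact (is_derive_snd _ _ _ HQ)].
  - simpl. ring.
Qed.

Lemma is_derive_enorm (Y : R -> pt) (t : R) (w : pt) :
  is_derive Y t w -> Y t <> (0, 0) ->
  is_derive (fun s => enorm (Y s)) t (dot (Y t) w / enorm (Y t)).
Proof.
  intros HY Hnz. pose proof (dot_self_pos _ Hnz) as Hpos.
  apply (is_derive_ext (fun s => sqrt (dot (Y s) (Y s)))); [intros s; symmetry; apply enorm_dot|].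
  eapply is_derive_eq.
  - apply (is_derive_sqrt (fun s => dot (Y s) (Y s))); [|exact Hpos].
    apply (is_derive_dot Y Y t w w HY HY).
  - rewrite enorm_dot.
    assert (0 < sqrt (dot (Y t) (Y t))) by (apply sqrt_lt_R0; exact Hpos).
    unfold dot in *. field. lra.
Qed.

Lemma continuous_enorm (p : pt) : continuous enorm p.
Proof.
  unfold enorm. apply (continuous_comp (fun q : pt => fst q ^ 2 + snd q ^ 2) sqrt).
  - apply (@continuous_plus (prod_UniformSpace R_UniformSpace R_UniformSpace) R_AbsRing R_NormedModule);
      apply (continuous_comp _ (fun x : R => x ^ 2));
      first [ apply continuous_fst | apply continuous_snd
            | apply ex_derive_continuous_R; auto_derive; auto ].
  - apply continuous_sqrt.
Qed.

Lemma filterlim_enorm {T} {F : (T -> Prop) -> Prop} {FF : Filter F} (Y : T -> pt) (p : pt) :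
  filterlim Y F (locally p) -> filterlim (fun s => enorm (Y s)) F (locally (enorm p)).
Proof. intros HY. exact (filterlim_comp _ _ _ Y enorm F _ _ HY (continuous_enorm p)). Qed.



Lemma open_enorm_lt (rho : R) : open (fun p : pt => enorm p < rho).
Proof.
  apply (open_comp enorm (fun r => r < rho)); [intros p _; apply continuous_enorm|apply open_lt].
Qed.

Lemma open_enorm_gt (rho : R) : open (fun p : pt => rho < enorm p).
Proof.
  apply (open_comp enorm (fun r => rho < r)); [intros p _; apply continuous_enorm|apply open_gt].
Qed.

Lemma dot_le_enorm (p q : pt) : dot p q <= enorm p * enorm q.
Proof.
  pose proof (dot_cross_sq p q) as Hlag. rewrite <- !enorm_sq in Hlag.
  assert (0 <= enorm p) by apply sqrt_pos. assert (0 <= enorm q) by apply sqrt_pos.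
  apply Rsqr_incr_0_var; [rewrite !Rsqr_pow2; nra|nra].
Qed.

Lemma enorm_sub_ge (p q : pt) : Rabs (enorm q - enorm p) <= enorm (fst q - fst p, snd q - snd p).
Proof.
  pose proof (dot_le_enorm p q) as Hcs.
  assert (Hd : enorm (fst q - fst p, snd q - snd p) ^ 2 = dot q q - 2 * dot p q + dot p p)
    by (rewrite enorm_sq; unfold dot; simpl; ring).
  rewrite <- !enorm_sq in Hd.
  apply Rsqr_incr_0_var; [|apply sqrt_pos].
  rewrite <- Rsqr_abs, !Rsqr_pow2. nra.
Qed.

Lemma enorm_self_sub (p : pt) : enorm (fst p - fst p, snd p - snd p) = 0.
Proof.
  unfold enorm; cbn [fst snd]. rewrite !Rminus_diag.
  replace (0 ^ 2 + 0 ^ 2) with 0 by ring. apply sqrt_0.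
Qed.

Lemma admissible_domain_radii (L : pt -> Prop) : admissible_domain L ->
  forall x1 x2 rho, L x1 -> L x2 -> enorm x1 <= rho <= enorm x2 -> exists p, L p /\ enorm p = rho.
Proof.
  intros [[O [_ [Hconn HLO]]] _] x1 x2 rho Hx1 Hx2 Hrho.
  destruct (Req_dec rho (enorm x1)) as [->|Hrho1]; [exists x1; split; [exact Hx1|reflexivity]|].
  destruct (Req_dec rho (enorm x2)) as [->|Hrho2]; [exists x2; split; [exact Hx2|reflexivity]|].
  apply NNPP. intros Hno.
  apply Hconn. exists (fun p => enorm p < rho), (fun p => rho < enorm p).
  split; [apply open_enorm_lt|]. split; [apply open_enorm_gt|].
  split; [|split; [|split]].
  - intros p Hp. destruct (Rtotal_order (enorm p) rho) as [Hlt|[Heq|Hgt]];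
      [left; exact Hlt| |right; exact Hgt].
    exfalso. apply Hno. exists p. split; [|exact Heq]. apply HLO. intros eps Heps.
    exists p. split; [exact Hp|]. rewrite enorm_self_sub. exact Heps.
  - destruct (proj1 (HLO x1) Hx1 (rho - enorm x1) ltac:(lra)) as [p [Hp Hclose]].
    exists p. split; [exact Hp|]. pose proof (enorm_sub_ge x1 p) as Htri.
    apply Rabs_le_between in Htri. lra.
  - destruct (proj1 (HLO x2) Hx2 (enorm x2 - rho) ltac:(lra)) as [p [Hp Hclose]].
    exists p. split; [exact Hp|]. pose proof (enorm_sub_ge x2 p) as Htri.
    apply Rabs_le_between in Htri. lra.
  - intros p [_ [Hlt Hgt]]. lra.
Qed.

(** * Radial motion and arrival time *)

(* The squared radial speed at radius [w] of a particle launched at radius [s];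
   [integrand U g h w s] is [/ sqrt (radial_speed_sq U g h w s)]. *)
Definition radial_speed_sq (U g h : R -> R) (w s : R) : R := 2 * (E0 U g h s - Vfun U h w s).

Definition arrival_time (U g h : R -> R) (s z : R) : R := RInt (fun w => integrand U g h w s) s z.

Lemma radial_speed_sq_diag (U g h : R -> R) (s : R) : s <> 0 -> radial_speed_sq U g h s s = g s ^ 2.
Proof. intros Hs. unfold radial_speed_sq, E0, Vfun. field. exact Hs. Qed.

Lemma radial_speed_sq_split (U g h : R -> R) (w s : R) : w <> 0 ->
  radial_speed_sq U g h w s = 2 * E0 U g h s - 2 * U w - Mfun h s ^ 2 / w ^ 2.
Proof. intros Hw. unfold radial_speed_sq, Vfun, Mfun. field. exact Hw. Qed.

Lemma is_derive_radial_speed_sq (U g h : R -> R) (w s : R) : 0 < w -> ex_derive U w ->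
  is_derive (fun w => radial_speed_sq U g h w s) w (2 * (- Derive U w + Mfun h s ^ 2 / w ^ 3)).
Proof.
  intros Hw HU. unfold radial_speed_sq, Vfun. auto_derive.
  - repeat split; auto. apply Rgt_not_eq. nra.
  - unfold Mfun. change (Derive (fun x => U x) w) with (Derive U w). field. lra.
Qed.

Lemma continuous_radial_speed_sq (U g h : R -> R) (w s : R) : 0 < w -> ex_derive U w ->
  continuous (fun w => radial_speed_sq U g h w s) w.
Proof.
  intros Hw HU. apply ex_derive_continuous_R.
  exists (2 * (- Derive U w + Mfun h s ^ 2 / w ^ 3)). apply is_derive_radial_speed_sq; assumption.
Qed.

Lemma ex_derive_integrand (U g h : R -> R) (w s : R) : 0 < w -> ex_derive U w ->
  0 < radial_speed_sq U g h w s -> ex_derive (fun w => integrand U g h w s) w.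
Proof.
  intros Hw HU HG. unfold integrand.
  apply (ex_derive_comp (fun x => / sqrt x) (fun w => radial_speed_sq U g h w s)).
  - auto_derive. repeat split; auto. apply Rgt_not_eq, sqrt_lt_R0. exact HG.
  - eexists. apply is_derive_radial_speed_sq; assumption.
Qed.

Section RadialMotion.

Variables (U g h : R -> R) (s : R).
Hypothesis U_derive : forall r, 0 < r -> ex_derive U r.
Hypothesis s_pos : 0 < s.
Hypothesis g_pos : 0 < g s.
Hypothesis outward_force : forall r, s <= r -> 0 <= - Derive U r + Mfun h s ^ 2 / r ^ 3.

Lemma radial_speed_sq_ge (w : R) : s <= w -> g s ^ 2 <= radial_speed_sq U g h w s.
Proof.
  intros Hw. rewrite <- (radial_speed_sq_diag U g h s) by lra.
  destruct (Req_dec w s) as [->|Hne]; [lra|].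
  destruct (MVT_gen (fun w => radial_speed_sq U g h w s) s w
     (fun c => 2 * (- Derive U c + Mfun h s ^ 2 / c ^ 3))) as [c [Hc HMVT]];
    rewrite ?Rmin_left, ?Rmax_right in * by lra.
  - intros c Hc. apply is_derive_radial_speed_sq; [lra|apply U_derive; lra].
  - intros c Hc. apply continuity_pt_filterlim, continuous_radial_speed_sq; [lra|apply U_derive; lra].
  - specialize (outward_force c ltac:(lra)). nra.
Qed.

Lemma radial_speed_sq_pos (w : R) : s <= w -> 0 < radial_speed_sq U g h w s.
Proof. intros Hw. pose proof (radial_speed_sq_ge w Hw). nra. Qed.

Lemma radial_speed_sq_pos_near : exists d, 0 < d /\
  forall w, s - d < w -> 0 < w /\ 0 < radial_speed_sq U g h w s.
Proof.
  assert (Hcont : continuous (fun w => radial_speed_sq U g h w s) s).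
  { apply continuous_radial_speed_sq; [lra|apply U_derive; lra]. }
  destruct (locally_R _ _ (filterlim_locally_pos _ _ _ Hcont (radial_speed_sq_pos s (Rle_refl s))))
    as [d [Hd Hnear]].
  exists (Rmin d (s / 2)). split; [apply Rmin_pos; lra|].
  pose proof (Rmin_l d (s / 2)). pose proof (Rmin_r d (s / 2)).
  intros w Hw. split; [lra|].
  destruct (Rle_or_lt s w) as [Hsw|Hws]; [apply radial_speed_sq_pos; exact Hsw|].
  apply Hnear. rewrite Rabs_left; lra.
Qed.

Lemma is_derive_arrival_time_near : exists d, 0 < d /\
  forall z, s - d < z -> is_derive (arrival_time U g h s) z (integrand U g h z s).
Proof.
  destruct radial_speed_sq_pos_near as [d [Hd Hnear]].
  assert (Hcont : forall w, s - d < w -> continuous (fun w => integrand U g h w s) w).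
  { intros w Hw. destruct (Hnear w Hw). apply ex_derive_continuous_R, ex_derive_integrand; auto. }
  exists d. split; [exact Hd|]. intros z Hz.
  apply (is_derive_RInt (fun w => integrand U g h w s) (arrival_time U g h s) s z); [|apply Hcont; lra].
  apply filter_imp with (2 := open_gt (s - d) z Hz). intros b Hb.
  apply (@RInt_correct R_CompleteNormedModule), ex_RInt_continuous_R.
  intros w Hw. apply Hcont. assert (s - d < Rmin s b) by (apply Rmin_glb_lt; lra). lra.
Qed.

Lemma arrival_time_increasing (z1 z2 : R) : s <= z1 -> z1 < z2 ->
  arrival_time U g h s z1 < arrival_time U g h s z2.
Proof.
  intros Hz1 Hz12.
  destruct is_derive_arrival_time_near as [d [Hd HT]].
  destruct (MVT_gen (arrival_time U g h s) z1 z2 (fun w => integrand U g h w s)) as [c [Hc HMVT]];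
    rewrite ?Rmin_left, ?Rmax_right in * by lra.
  - intros w Hw. apply HT. lra.
  - intros w Hw. apply continuity_pt_filterlim, ex_derive_continuous_R. eexists. apply HT. lra.
  - assert (0 < integrand U g h c s); [|nra].
    apply Rinv_0_lt_compat, sqrt_lt_R0, radial_speed_sq_pos. lra.
Qed.

Lemma arrival_time_inj (z1 z2 : R) : s <= z1 -> s <= z2 ->
  arrival_time U g h s z1 = arrival_time U g h s z2 -> z1 = z2.
Proof.
  intros Hz1 Hz2 HT.
  destruct (Rtotal_order z1 z2) as [Hlt|[Heq|Hgt]]; [|exact Heq|].
  - pose proof (arrival_time_increasing z1 z2 Hz1 Hlt). lra.
  - pose proof (arrival_time_increasing z2 z1 Hz2 Hgt). lra.
Qed.

End RadialMotion.

(** * Conservation laws along a trajectory *)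

Section Trajectory.

Variables (U g h : R -> R) (x : pt) (Y V : R -> pt).
Hypothesis U_derive : forall r, 0 < r -> ex_derive U r.
Hypothesis newton : solves_newton U Y V x.
Hypothesis radial_init : radial_vel x (V 0) = g (enorm x).
Hypothesis angular_init : angular_vel x (V 0) = h (enorm x).

Let s := enorm x.

Lemma trajectory_nonzero (t : R) : 0 <= t -> Y t <> (0, 0).
Proof. destruct newton as [_ [Hnz _]]. exact (Hnz t). Qed.

Lemma enorm_init_pos : 0 < s.
Proof.
  destruct newton as [HY0 _]. unfold s. rewrite <- HY0. apply enorm_pos, trajectory_nonzero. lra.
Qed.

Lemma is_derive_dot_self (t : R) : 0 < t ->
  is_derive (fun u => dot (Y u) (Y u)) t (2 * dot (Y t) (V t)).
Proof.
  intros Ht. destruct newton as [_ [_ [Hder _]]]. destruct (Hder t Ht) as [HY _].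
  eapply is_derive_eq; [apply (is_derive_dot Y Y t _ _ HY HY)|]. unfold dot. ring.
Qed.

Lemma cross_trajectory_const (t : R) : 0 <= t -> cross (Y t) (V t) = cross x (V 0).
Proof.
  destruct newton as [HY0 [Hnz [Hder [HcY HcV]]]]. rewrite <- HY0.
  apply (const_nonneg (fun t => cross (Y t) (V t)) (fun _ => 0)); [| |reflexivity].
  - intros u Hu. destruct (Hder u Hu) as [HYu HVu].
    eapply is_derive_eq; [apply (is_derive_cross Y V u _ _ HYu HVu)|].
    assert (0 < enorm (Y u)) by (apply enorm_pos, Hnz; lra).
    unfold cross, Ffield; simpl. field. lra.
  - unfold cross. solve_filterlim.
Qed.

Lemma energy_trajectory_const (t : R) : 0 <= t ->
  / 2 * dot (V t) (V t) + U (enorm (Y t)) = / 2 * dot (V 0) (V 0) + U s.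
Proof.
  destruct newton as [HY0 [Hnz [Hder [HcY HcV]]]]. unfold s. rewrite <- HY0.
  apply (const_nonneg (fun t => / 2 * dot (V t) (V t) + U (enorm (Y t))) (fun _ => 0));
    [| |reflexivity].
  - intros u Hu. destruct (Hder u Hu) as [HYu HVu].
    assert (Hr : 0 < enorm (Y u)) by (apply enorm_pos, Hnz; lra).
    eapply is_derive_eq.
    + apply is_derive_Rplus.
      * apply (is_derive_scal (fun u => dot (V u) (V u))), (is_derive_dot V V u _ _ HVu HVu).
      * apply (is_derive_Rcomp U (fun u => enorm (Y u))).
        -- apply Derive_correct, U_derive, Hr.
        -- apply (is_derive_enorm Y u _ HYu), Hnz. lra.
    + unfold dot, Ffield; simpl. field. lra.
  - apply filterlim_Rplus.
    + apply filterlim_Rmult; [apply filterlim_const|]. unfold dot. solve_filterlim.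
    + apply filterlim_Rcomp; [apply filterlim_enorm, HcY|].
      apply ex_derive_continuous_R, U_derive, enorm_pos, Hnz. lra.
Qed.

Lemma dot_init : dot x (V 0) = g s * s.
Proof.
  pose proof enorm_init_pos as Hs. unfold radial_vel in radial_init.
  fold (dot x (V 0)) s in radial_init. rewrite <- radial_init. field. lra.
Qed.

Lemma cross_init : cross x (V 0) = Mfun h s.
Proof.
  pose proof enorm_init_pos as Hs. unfold angular_vel in angular_init.
  fold (cross x (V 0)) s in angular_init. unfold Mfun. rewrite <- angular_init. field. lra.
Qed.

Lemma cross_trajectory (t : R) : 0 <= t -> cross (Y t) (V t) = Mfun h s.
Proof. intros Ht. rewrite cross_trajectory_const by exact Ht. exact cross_init. Qed.

Lemma speed_sq_trajectory (t : R) : 0 <= t ->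
  dot (V t) (V t) = 2 * (E0 U g h s - U (enorm (Y t))).
Proof.
  intros Ht. pose proof (energy_trajectory_const t Ht) as Henergy.
  pose proof enorm_init_pos as Hs.
  assert (Hspeed0 : dot (V 0) (V 0) = g s ^ 2 + s ^ 2 * h s ^ 2).
  { apply Rmult_eq_reg_l with (s ^ 2); [|nra].
    unfold s at 1. rewrite enorm_sq, <- dot_cross_sq, dot_init, cross_init. unfold Mfun. ring. }
  unfold E0. lra.
Qed.

Lemma dot_trajectory_sq (t : R) : 0 <= t ->
  dot (Y t) (V t) ^ 2 = enorm (Y t) ^ 2 * radial_speed_sq U g h (enorm (Y t)) s.
Proof.
  intros Ht. assert (Hr : 0 < enorm (Y t)) by (apply enorm_pos, trajectory_nonzero, Ht).
  replace (dot (Y t) (V t) ^ 2) with (dot (Y t) (Y t) * dot (V t) (V t) - cross (Y t) (V t) ^ 2)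
    by (rewrite <- dot_cross_sq; ring).
  rewrite speed_sq_trajectory, cross_trajectory, <- enorm_sq by exact Ht.
  rewrite (radial_speed_sq_split U g h) by lra. field. lra.
Qed.

Hypothesis g_pos : 0 < g s.
Hypothesis outward_force : forall r, s <= r -> 0 <= - Derive U r + Mfun h s ^ 2 / r ^ 3.

(* While the radial velocity is positive the radius exceeds [s], where the
   squared radial speed is at least [g s ^ 2]; so it can never vanish. *)
Lemma dot_trajectory_pos (t : R) : 0 <= t -> 0 < dot (Y t) (V t).
Proof.
  pose proof enorm_init_pos as Hs.
  destruct newton as [HY0 [Hnz [Hder [HcY HcV]]]].
  assert (Hq_rc : filterlim (fun u => dot (Y u) (Y u)) (at_right 0) (locally (dot (Y 0) (Y 0))))
    by (unfold dot; solve_filterlim).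
  revert t. apply (positive_nonneg (fun u => dot (Y u) (V u))).
  - intros u Hu. destruct (Hder u Hu) as [HYu HVu].
    apply ex_derive_continuous_R. eexists. apply (is_derive_dot Y V u _ _ HYu HVu).
  - unfold dot. solve_filterlim.
  - rewrite HY0, dot_init. nra.
  - intros u Hu Hbefore Hzero.
    destruct (MVT_nonneg _ _ is_derive_dot_self Hq_rc 0 u ltac:(lra)) as [c [Hc [Hcu HMVT]]].
    assert (Hc_nonneg : 0 <= dot (Y c) (V c)).
    { destruct (Req_dec c u) as [->|Hcu']; [lra|]. left. apply Hbefore. lra. }
    assert (Hsu : s <= enorm (Y u)).
    { unfold s. rewrite !enorm_dot, <- HY0. apply sqrt_le_1_alt. nra. }
    pose proof (dot_trajectory_sq u ltac:(lra)) as Hsq.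
    pose proof (radial_speed_sq_pos U g h s U_derive Hs g_pos outward_force _ Hsu).
    pose proof (enorm_pos _ (Hnz u ltac:(lra))).
    rewrite Hzero in Hsq. assert (0 < enorm (Y u) ^ 2) by nra. nra.
Qed.

Lemma enorm_trajectory_gt (t : R) : 0 < t -> s < enorm (Y t).
Proof.
  intros Ht. destruct newton as [HY0 [Hnz [Hder [HcY HcV]]]].
  assert (Hq : dot (Y 0) (Y 0) < dot (Y t) (Y t)).
  { apply (increasing_nonneg (fun u => dot (Y u) (Y u)) (fun u => 2 * dot (Y u) (V u))).
    - exact is_derive_dot_self.
    - unfold dot. solve_filterlim.
    - intros u Hu. pose proof (dot_trajectory_pos u ltac:(lra)). lra.
    - lra. }
  unfold s. rewrite !enorm_dot, <- HY0. apply sqrt_lt_1_alt. split; [unfold dot; nra|exact Hq].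
Qed.

Lemma enorm_trajectory_ge (t : R) : 0 <= t -> s <= enorm (Y t).
Proof.
  intros Ht. destruct (Req_dec t 0) as [->|Hn].
  - destruct newton as [HY0 _]. rewrite HY0. apply Rle_refl.
  - left. apply enorm_trajectory_gt. lra.
Qed.

Lemma dot_trajectory (t : R) : 0 <= t ->
  dot (Y t) (V t) = enorm (Y t) * sqrt (radial_speed_sq U g h (enorm (Y t)) s).
Proof.
  intros Ht. pose proof enorm_init_pos as Hs.
  pose proof (radial_speed_sq_pos U g h s U_derive Hs g_pos outward_force _ (enorm_trajectory_ge t Ht)).
  pose proof (enorm_pos _ (trajectory_nonzero t Ht)).
  rewrite <- (sqrt_pow2 (dot (Y t) (V t))) by (left; apply dot_trajectory_pos, Ht).
  rewrite dot_trajectory_sq, sqrt_mult, sqrt_pow2 by (try apply pow2_ge_0; lra). reflexivity.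
Qed.

(* [t |-> T(s, |Y t|) - t] has zero derivative, since the radius moves with
   exactly the radial speed whose inverse is integrated in [T]. *)
Lemma arrival_time_trajectory (t : R) : 0 <= t -> arrival_time U g h s (enorm (Y t)) = t.
Proof.
  intros Ht. pose proof enorm_init_pos as Hs.
  destruct (is_derive_arrival_time_near U g h s U_derive Hs g_pos outward_force) as [d [Hd HT]].
  destruct newton as [HY0 [Hnz [Hder [HcY HcV]]]].
  cut (arrival_time U g h s (enorm (Y t)) - t = arrival_time U g h s (enorm (Y 0)) - 0).
  { rewrite HY0. unfold arrival_time at 2. rewrite RInt_point. unfold zero; simpl. lra. }
  revert t Ht.
  apply (const_nonneg (fun t => arrival_time U g h s (enorm (Y t)) - t) (fun _ => 0));
    [| |reflexivity].
  - intros u Hu. destruct (Hder u Hu) as [HYu _].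
    pose proof (enorm_trajectory_gt u Hu) as Hsu.
    pose proof (radial_speed_sq_pos U g h s U_derive Hs g_pos outward_force _ (Rlt_le _ _ Hsu)) as HG.
    eapply is_derive_eq.
    + apply is_derive_Rminus; [|apply is_derive_id].
      apply (is_derive_Rcomp (arrival_time U g h s) (fun u => enorm (Y u))).
      * apply HT. lra.
      * apply (is_derive_enorm Y u _ HYu), Hnz. lra.
    + rewrite dot_trajectory by lra. unfold integrand. fold (radial_speed_sq U g h (enorm (Y u)) s).
      assert (0 < sqrt (radial_speed_sq U g h (enorm (Y u)) s)) by (apply sqrt_lt_R0, HG).
      unfold one; simpl. field. lra.
  - apply filterlim_Rminus; [|apply filterlim_at_right_id].
    apply filterlim_Rcomp; [apply filterlim_enorm, HcY|].
    apply ex_derive_continuous_R. eexists. apply HT. rewrite HY0. fold s. lra.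
Qed.

End Trajectory.

(** * Dependence of the arrival time on the initial radius *)

Lemma Rinv_sq_le_half (s w : R) : 0 < s -> s / 2 <= w -> 0 < / w ^ 2 <= 4 / s ^ 2.
Proof.
  intros Hs Hw. split; [apply Rinv_0_lt_compat; nra|].
  replace (4 / s ^ 2) with (/ (s / 2) ^ 2) by (field; lra).
  apply Rinv_le_contravar; [nra|apply pow_incr; lra].
Qed.

Section ArrivalTimeDerivative.

Variables (U g h : R -> R) (s0 z : R).
Hypothesis U_derive : forall r, 0 < r -> ex_derive U r.
Hypothesis s0_pos : 0 < s0.
Hypothesis s0_lt_z : s0 < z.
Hypothesis g_pos : 0 < g s0.
Hypothesis outward_force : forall r, s0 <= r -> 0 <= - Derive U r + Mfun h s0 ^ 2 / r ^ 3.
Hypothesis integrand_derive_s0 : ex_derive (fun s => integrand U g h s0 s) s0.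
Hypothesis integrand_derive_z : ex_derive (fun s => integrand U g h z s) s0.

(* [radial_speed_sq U g h w s] depends on [s] through [E0 U g h s] and
   [Mfun h s ^ 2] only; its values at the two radii [s0] and [z] determine both. *)
Lemma ex_derive_E0_Mfun_sq : ex_derive (E0 U g h) s0 /\ ex_derive (fun s => Mfun h s ^ 2) s0.
Proof.
  assert (HG0 : ex_derive (fun s => radial_speed_sq U g h s0 s) s0).
  { apply (ex_derive_of_inv_sqrt (fun s => radial_speed_sq U g h s0 s) s0 integrand_derive_s0).
    apply (radial_speed_sq_pos U g h s0); auto; lra. }
  assert (HGz : ex_derive (fun s => radial_speed_sq U g h z s) s0).
  { apply (ex_derive_of_inv_sqrt (fun s => radial_speed_sq U g h z s) s0 integrand_derive_z).
    apply (radial_speed_sq_pos U g h s0); auto; lra. }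
  assert (Hk : / z ^ 2 - / s0 ^ 2 <> 0).
  { assert (Hs2 : 0 < s0 ^ 2) by (apply pow_lt; lra).
    assert (Hsz : s0 ^ 2 < z ^ 2) by nra.
    assert (/ z ^ 2 < / s0 ^ 2) by (apply Rinv_lt_contravar; [apply Rmult_lt_0_compat|]; lra).
    lra. }
  assert (HM : forall s, Mfun h s ^ 2 = (radial_speed_sq U g h s0 s - radial_speed_sq U g h z s
                 + 2 * U s0 - 2 * U z) / (/ z ^ 2 - / s0 ^ 2)).
  { intros s. rewrite !(radial_speed_sq_split U g h) by lra. field. repeat split; nra. }
  assert (HdM : ex_derive (fun s => Mfun h s ^ 2) s0).
  { eapply ex_derive_ext; [intros s; symmetry; apply HM|]. auto_derive. repeat split; assumption. }
  split; [|exact HdM].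
  set (b := fun s => Mfun h s ^ 2).
  assert (Hb : ex_derive b s0) by exact HdM.
  assert (HE : forall s, E0 U g h s = (radial_speed_sq U g h s0 s + 2 * U s0 + b s / s0 ^ 2) / 2).
  { intros s. unfold b. rewrite (radial_speed_sq_split U g h) by lra. field. lra. }
  clearbody b. eapply ex_derive_ext; [intros s; symmetry; apply HE|].
  auto_derive. split; [exact HG0|split; [exact Hb|exact I]].
Qed.

Let e' := Derive (E0 U g h) s0.
Let b' := Derive (fun s => Mfun h s ^ 2) s0.

Lemma radial_speed_sq_param_increment (w s : R) : w <> 0 ->
  radial_speed_sq U g h w s - radial_speed_sq U g h w s0
  = 2 * (E0 U g h s - E0 U g h s0) - (Mfun h s ^ 2 - Mfun h s0 ^ 2) / w ^ 2.
Proof. intros Hw. rewrite !(radial_speed_sq_split U g h) by exact Hw. field. exact Hw. Qed.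

Lemma radial_speed_sq_param_linear_approx : forall eta, 0 < eta -> exists d, 0 < d /\
  forall s w, Rabs (s - s0) < d -> s0 / 2 <= w ->
    Rabs (radial_speed_sq U g h w s - radial_speed_sq U g h w s0 - (s - s0) * (2 * e' - b' / w ^ 2))
      <= eta * Rabs (s - s0).
Proof.
  intros eta Heta. destruct ex_derive_E0_Mfun_sq as [HE HM].
  set (K := 2 + 4 / s0 ^ 2).
  assert (HK : 2 <= K) by (unfold K; assert (0 < 4 / s0 ^ 2) by (apply Rdiv_lt_0_compat; nra); lra).
  destruct (is_derive_linear_approx _ _ _ (Derive_correct _ _ HE) (eta / K)
    ltac:(apply Rdiv_lt_0_compat; lra)) as [de [Hde Happrox_e]].
  destruct (is_derive_linear_approx _ _ _ (Derive_correct _ _ HM) (eta / K)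
    ltac:(apply Rdiv_lt_0_compat; lra)) as [db [Hdb Happrox_b]].
  exists (Rmin de db). split; [apply Rmin_pos; assumption|].
  intros s w Hs Hw. pose proof (Rmin_l de db). pose proof (Rmin_r de db).
  specialize (Happrox_e s ltac:(lra)). specialize (Happrox_b s ltac:(lra)).
  fold e' in Happrox_e. fold b' in Happrox_b.
  pose proof (Rinv_sq_le_half s0 w s0_pos Hw) as Hw2.
  rewrite radial_speed_sq_param_increment by lra.
  replace (2 * (E0 U g h s - E0 U g h s0) - (Mfun h s ^ 2 - Mfun h s0 ^ 2) / w ^ 2
           - (s - s0) * (2 * e' - b' / w ^ 2))
    with (2 * (E0 U g h s - E0 U g h s0 - e' * (s - s0))
          - / w ^ 2 * (Mfun h s ^ 2 - Mfun h s0 ^ 2 - b' * (s - s0))) by (field; lra).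
  eapply Rle_trans; [apply Rabs_triang|].
  rewrite Rabs_Ropp, !Rabs_mult, (Rabs_right 2), (Rabs_right (/ w ^ 2)) by lra.
  apply Rle_trans with (2 * (eta / K * Rabs (s - s0)) + 4 / s0 ^ 2 * (eta / K * Rabs (s - s0))).
  - apply Rplus_le_compat; [lra|].
    apply Rmult_le_compat; [lra|apply Rabs_pos|lra|exact Happrox_b].
  - right. unfold K. field. split; [lra|nra].
Qed.

Lemma radial_speed_sq_param_lipschitz : exists C d, 0 < C /\ 0 < d /\
  forall s w, Rabs (s - s0) < d -> s0 / 2 <= w ->
    Rabs (radial_speed_sq U g h w s - radial_speed_sq U g h w s0) <= C * Rabs (s - s0).
Proof.
  destruct (radial_speed_sq_param_linear_approx 1 Rlt_0_1) as [d [Hd Happrox]].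
  exists (2 * Rabs e' + 4 / s0 ^ 2 * Rabs b' + 1), d.
  assert (H4 : 0 < 4 / s0 ^ 2) by (apply Rdiv_lt_0_compat; nra).
  pose proof (Rabs_pos e'). pose proof (Rabs_pos b').
  split; [nra|]. split; [exact Hd|]. intros s w Hs Hw.
  specialize (Happrox s w Hs Hw).
  pose proof (Rinv_sq_le_half s0 w s0_pos Hw) as Hw2.
  assert (Hlin : Rabs ((s - s0) * (2 * e' - b' / w ^ 2))
                 <= (2 * Rabs e' + 4 / s0 ^ 2 * Rabs b') * Rabs (s - s0)).
  { rewrite Rabs_mult, Rmult_comm. apply Rmult_le_compat_r; [apply Rabs_pos|].
    unfold Rminus, Rdiv. eapply Rle_trans; [apply Rabs_triang|].
    rewrite Rabs_Ropp, !Rabs_mult, (Rabs_right 2), (Rabs_right (/ w ^ 2)) by lra. nra. }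
  replace (radial_speed_sq U g h w s - radial_speed_sq U g h w s0) with
    ((radial_speed_sq U g h w s - radial_speed_sq U g h w s0 - (s - s0) * (2 * e' - b' / w ^ 2))
     + (s - s0) * (2 * e' - b' / w ^ 2)) by ring.
  eapply Rle_trans; [apply Rabs_triang|]. lra.
Qed.

Lemma radial_speed_sq_joint_cont : forall eps, 0 < eps -> exists d, 0 < d /\
  forall s w, Rabs (s - s0) < d -> Rabs (w - s0) < d ->
    Rabs (radial_speed_sq U g h w s - radial_speed_sq U g h s0 s0) < eps.
Proof.
  intros eps Heps.
  destruct radial_speed_sq_param_lipschitz as [C [d1 [HC [Hd1 Hlip]]]].
  destruct (continuous_R_eps _ _ (continuous_radial_speed_sq U g h s0 s0 s0_pos (U_derive s0 s0_pos))
    (eps / 2) ltac:(lra)) as [dw [Hdw Hcont]].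
  destruct (exists_pos_le4 d1 (s0 / 2) dw (eps / (2 * C)) Hd1 ltac:(lra) Hdw
    ltac:(apply Rdiv_lt_0_compat; lra)) as [d [Hd Hd_le]].
  exists d. split; [exact Hd|].
  intros s w Hs Hw. pose proof (Rabs_def2 _ _ Hw).
  specialize (Hlip s w ltac:(lra) ltac:(lra)). specialize (Hcont w ltac:(lra)).
  replace (radial_speed_sq U g h w s - radial_speed_sq U g h s0 s0) with
    ((radial_speed_sq U g h w s - radial_speed_sq U g h w s0)
     + (radial_speed_sq U g h w s0 - radial_speed_sq U g h s0 s0)) by ring.
  eapply Rle_lt_trans; [apply Rabs_triang|].
  assert (C * Rabs (s - s0) < eps / 2); [|lra].
  apply Rlt_le_trans with (C * (eps / (2 * C))); [apply Rmult_lt_compat_l; lra|].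
  right. field. lra.
Qed.

Lemma radial_speed_sq_param_lower_bound : exists d, 0 < d /\
  forall s w, Rabs (s - s0) < d -> Rmin s s0 <= w ->
    0 < w /\ g s0 ^ 2 / 2 <= radial_speed_sq U g h w s.
Proof.
  assert (Hc : 0 < g s0 ^ 2 / 2) by nra.
  destruct (radial_speed_sq_joint_cont (g s0 ^ 2 / 2) Hc) as [dJ [HdJ Hjoint]].
  destruct radial_speed_sq_param_lipschitz as [C [d1 [HC [Hd1 Hlip]]]].
  destruct (exists_pos_le4 dJ d1 (s0 / 2) (g s0 ^ 2 / (2 * C)) HdJ Hd1 ltac:(lra)
    ltac:(apply Rdiv_lt_0_compat; lra)) as [d [Hd Hd_le]].
  exists d. split; [exact Hd|].
  intros s w Hs Hw. pose proof (Rabs_def2 _ _ Hs).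
  destruct (Rle_or_lt s0 w) as [Hw0|Hw0].
  - split; [lra|].
    pose proof (radial_speed_sq_ge U g h s0 U_derive s0_pos outward_force w Hw0).
    specialize (Hlip s w ltac:(lra) ltac:(lra)). apply Rabs_le_between in Hlip.
    assert (C * Rabs (s - s0) <= g s0 ^ 2 / 2); [|lra].
    apply Rle_trans with (C * (g s0 ^ 2 / (2 * C))); [apply Rmult_le_compat_l; lra|].
    right. field. lra.
  - assert (Hlow : s0 - d < Rmin s s0) by (apply Rmin_glb_lt; lra).
    split; [lra|].
    assert (Hws : Rabs (w - s0) < dJ) by (rewrite Rabs_left; lra).
    specialize (Hjoint s w ltac:(lra) Hws).
    rewrite radial_speed_sq_diag in Hjoint by lra. apply Rabs_def2 in Hjoint. lra.
Qed.

Let D (w : R) : R :=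
  - / 2 * (/ sqrt (radial_speed_sq U g h w s0)) ^ 3 * (2 * e' - b' / w ^ 2).

Lemma is_derive_integrand_param (w : R) : s0 <= w ->
  is_derive (fun s => integrand U g h w s) s0 (D w).
Proof.
  intros Hw. destruct ex_derive_E0_Mfun_sq as [HE HM].
  pose proof (radial_speed_sq_pos U g h s0 U_derive s0_pos g_pos outward_force w Hw) as HG.
  assert (HGd : is_derive (fun s => radial_speed_sq U g h w s) s0 (2 * e' - b' / w ^ 2)).
  { assert (Hsplit : forall s, 2 * E0 U g h s - 2 * U w - / w ^ 2 * Mfun h s ^ 2
                              = radial_speed_sq U g h w s).
    { intros s. rewrite (radial_speed_sq_split U g h) by lra. field. lra. }
    apply (is_derive_ext _ _ _ _ Hsplit).
    eapply is_derive_eq.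
    - apply is_derive_Rminus; [apply is_derive_Rminus|].
      + apply (is_derive_scal (E0 U g h)), Derive_correct, HE.
      + apply is_derive_const.
      + apply (is_derive_scal (fun s => Mfun h s ^ 2)), Derive_correct, HM.
    - fold e' b'. unfold zero; simpl. field. lra. }
  unfold integrand. fold (radial_speed_sq U g h w s0).
  eapply is_derive_eq.
  - apply (is_derive_Rcomp (fun x => / sqrt x) (fun s => radial_speed_sq U g h w s) s0 _ _
      (is_derive_inv_sqrt _ HG) HGd).
  - unfold D. ring.
Qed.

Lemma integrand_param_linear_approx : forall eps, 0 < eps -> exists d, 0 < d /\
  forall s, Rabs (s - s0) < d -> forall w, s0 <= w ->
    Rabs (integrand U g h w s - integrand U g h w s0 - (s - s0) * D w) <= eps * Rabs (s - s0).
Proof.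
  intros eps Heps.
  set (c := g s0 ^ 2 / 2). assert (Hc : 0 < c) by (unfold c; nra).
  assert (Hsc : 0 < sqrt c) by (apply sqrt_lt_R0, Hc).
  set (P := / 2 * (/ sqrt c) ^ 3).
  assert (HP : 0 < P) by (unfold P; apply Rmult_lt_0_compat; [lra|apply pow_lt, Rinv_0_lt_compat, Hsc]).
  destruct radial_speed_sq_param_lower_bound as [dL [HdL Hlow]].
  destruct radial_speed_sq_param_lipschitz as [C [d1 [HC [Hd1 Hlip]]]].
  destruct (radial_speed_sq_param_linear_approx (eps / (2 * P)) ltac:(apply Rdiv_lt_0_compat; lra))
    as [dA [HdA Happrox]].
  set (dq := eps * sqrt c ^ 5 / (2 * C ^ 2)).
  assert (Hdq : 0 < dq)
    by (unfold dq; apply Rdiv_lt_0_compat; [apply Rmult_lt_0_compat; [lra|apply pow_lt, Hsc]|nra]).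
  destruct (exists_pos_le4 dL d1 dA dq HdL Hd1 HdA Hdq) as [d [Hd [HdL' [Hd1' [HdA' Hdq']]]]].
  exists d. split; [exact Hd|]. intros s Hs w Hw.
  assert (Hx : c <= radial_speed_sq U g h w s).
  { apply (Hlow s w ltac:(lra)). pose proof (Rmin_r s s0). lra. }
  assert (Hx0 : c <= radial_speed_sq U g h w s0).
  { pose proof (radial_speed_sq_ge U g h s0 U_derive s0_pos outward_force w Hw). unfold c. nra. }
  pose proof (inv_sqrt_linear_approx _ _ c C (s - s0) (2 * e' - b' / w ^ 2) (eps / (2 * P)) Hc Hx Hx0
    (Hlip s w ltac:(lra) ltac:(lra)) (Happrox s w ltac:(lra) ltac:(lra))) as Hbound.
  fold P in Hbound. unfold integrand, D. fold (radial_speed_sq U g h w s) (radial_speed_sq U g h w s0).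
  eapply Rle_trans; [exact Hbound|].
  apply Rmult_le_compat_r; [apply Rabs_pos|].
  assert (C ^ 2 * Rabs (s - s0) / sqrt c ^ 5 <= eps / 2).
  { apply Rle_trans with (C ^ 2 * dq / sqrt c ^ 5).
    - unfold Rdiv. apply Rmult_le_compat_r; [left; apply Rinv_0_lt_compat, pow_lt, Hsc|].
      apply Rmult_le_compat_l; [nra|lra].
    - right. unfold dq. field. split; lra. }
  replace (P * (eps / (2 * P))) with (eps / 2) by (field; lra). lra.
Qed.

Lemma is_derive_arrival_time_init :
  ex_RInt (fun w => Derive (fun s => integrand U g h w s) s0) s0 z ->
  is_derive (fun s => arrival_time U g h s z) s0
    (- / g s0 + RInt (fun w => Derive (fun s => integrand U g h w s) s0) s0 z).
Proof.
  intros Hint.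
  assert (HD : forall w, Rmin s0 z < w < Rmax s0 z ->
            Derive (fun s => integrand U g h w s) s0 = D w).
  { rewrite Rmin_left, Rmax_right by lra. intros w Hw.
    apply is_derive_unique, is_derive_integrand_param. lra. }
  assert (Hg : integrand U g h s0 s0 = / g s0).
  { unfold integrand. fold (radial_speed_sq U g h s0 s0).
    rewrite radial_speed_sq_diag, sqrt_pow2 by lra. reflexivity. }
  rewrite (RInt_ext _ _ _ _ HD), <- Hg.
  apply (is_derive_RInt_param_lower (fun w s => integrand U g h w s) D s0 z s0_lt_z).
  - destruct radial_speed_sq_param_lower_bound as [d [Hd Hlow]].
    exists d. split; [exact Hd|]. intros s Hs w Hw.
    destruct (Hlow s w Hs ltac:(lra)) as [Hw0 HG].
    apply ex_derive_continuous_R, ex_derive_integrand; [exact Hw0|apply U_derive, Hw0|nra].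
  - intros eps Heps.
    assert (HG0 : 0 < radial_speed_sq U g h s0 s0) by (rewrite radial_speed_sq_diag; nra).
    destruct (continuous_R_eps _ _ (ex_derive_continuous_R _ _ (ex_intro _ _ (is_derive_inv_sqrt _ HG0)))
      eps Heps) as [eta [Heta Hcont]].
    destruct (radial_speed_sq_joint_cont eta Heta) as [d [Hd Hjoint]].
    exists d. split; [exact Hd|]. intros s w Hs Hw. exact (Hcont _ (Hjoint s w Hs Hw)).
  - intros eps Heps. destruct (integrand_param_linear_approx eps Heps) as [d [Hd Happrox]].
    exists d. split; [exact Hd|]. intros s Hs w Hw. apply Happrox; [exact Hs|lra].
  - apply (ex_RInt_ext _ _ _ _ HD Hint).
Qed.

End ArrivalTimeDerivative.

Lemma arrival_time_decreasing (U g h : R -> R) (s1 s2 z : R) :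
  (forall r, 0 < r -> ex_derive U r) -> 0 < s1 -> s1 < s2 -> s2 < z ->
  (forall s, s1 <= s <= s2 -> 0 < g s) ->
  (forall s r, s1 <= s <= s2 -> s <= r -> 0 <= - Derive U r + Mfun h s ^ 2 / r ^ 3) ->
  (forall s, s1 <= s <= s2 ->
     (forall w, s <= w <= z -> ex_derive (fun s' => integrand U g h w s') s) /\
     ex_RInt (fun w => Derive (fun s' => integrand U g h w s') s) s z /\
     RInt (fun w => Derive (fun s' => integrand U g h w s') s) s z < / g s) ->
  arrival_time U g h s2 z < arrival_time U g h s1 z.
Proof.
  intros HU Hs1 Hs12 Hs2z Hg HM Hint.
  set (dT := fun s => - / g s + RInt (fun w => Derive (fun s' => integrand U g h w s') s) s z).
  assert (HdT : forall s, s1 <= s <= s2 -> is_derive (fun s => arrival_time U g h s z) s (dT s)).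
  { intros s Hs. destruct (Hint s Hs) as [Hder [HRInt _]].
    apply (is_derive_arrival_time_init U g h s z HU ltac:(lra) ltac:(lra) (Hg s Hs)
      (fun r Hr => HM s r Hs Hr) (Hder s ltac:(lra)) (Hder z ltac:(lra)) HRInt). }
  destruct (MVT_gen (fun s => arrival_time U g h s z) s1 s2 dT) as [c [Hc HMVT]];
    rewrite ?Rmin_left, ?Rmax_right in * by lra.
  - intros s Hs. apply HdT. lra.
  - intros s Hs. apply continuity_pt_filterlim, (ex_derive_continuous_R (fun s => arrival_time U g h s z)).
    eexists. apply HdT, Hs.
  - assert (dT c < 0); [|nra].
    destruct (Hint c Hc) as [_ [_ Hlt]]. unfold dT. lra.
Qed.

(** * No collisions *)

(* The derivative of [dot a b / dot a a] vanishes along two trajectories with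
   equal radii, radial velocities and angular momenta. *)
Lemma co_rotating_identity (a b v w : pt) :
  dot a a = dot b b -> dot a v = dot b w -> cross a v = cross b w ->
  (dot v b + dot a w) * dot a a = dot a b * (2 * dot a v).
Proof.
  intros Hab Hdot Hcross.
  transitivity (dot a a * dot v b + dot b b * dot a w); [rewrite <- Hab; ring|].
  replace (dot a a * dot v b) with (dot a v * dot a b + cross a v * cross a b)
    by (unfold dot, cross; ring).
  replace (dot b b * dot a w) with (dot b w * dot a b - cross b w * cross a b)
    by (unfold dot, cross; ring).
  rewrite <- Hdot, <- Hcross. ring.
Qed.

Lemma pt_eq_of_dot (a b : pt) : dot a a = dot b b -> dot a b = dot a a -> a = b.
Proof.
  destruct a as [a1 a2], b as [b1 b2]. unfold dot; simpl. intros Hab Hdot.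
  assert (Hsq : (a1 - b1) ^ 2 + (a2 - b2) ^ 2 = 0) by nra.
  pose proof (pow2_ge_0 (a1 - b1)). pose proof (pow2_ge_0 (a2 - b2)).
  assert (H1 : (a1 - b1) ^ 2 = 0) by lra. assert (H2 : (a2 - b2) ^ 2 = 0) by lra.
  rewrite <- Rsqr_pow2 in H1, H2. apply Rsqr_0_uniq in H1, H2. f_equal; lra.
Qed.

Section SameInitialRadius.

Variables (U g h : R -> R) (x1 x2 : pt) (Y1 V1 Y2 V2 : R -> pt).
Hypothesis U_derive : forall r, 0 < r -> ex_derive U r.
Hypothesis newton1 : solves_newton U Y1 V1 x1.
Hypothesis newton2 : solves_newton U Y2 V2 x2.
Hypothesis radial_init1 : radial_vel x1 (V1 0) = g (enorm x1).
Hypothesis angular_init1 : angular_vel x1 (V1 0) = h (enorm x1).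
Hypothesis radial_init2 : radial_vel x2 (V2 0) = g (enorm x2).
Hypothesis angular_init2 : angular_vel x2 (V2 0) = h (enorm x2).
Hypothesis same_radius : enorm x1 = enorm x2.
Hypothesis g_pos : 0 < g (enorm x1).
Hypothesis outward_force :
  forall r, enorm x1 <= r -> 0 <= - Derive U r + Mfun h (enorm x1) ^ 2 / r ^ 3.

Let g_pos2 : 0 < g (enorm x2).
Proof. rewrite <- same_radius. exact g_pos. Qed.

Let outward_force2 :
  forall r, enorm x2 <= r -> 0 <= - Derive U r + Mfun h (enorm x2) ^ 2 / r ^ 3.
Proof. rewrite <- same_radius. exact outward_force. Qed.

Lemma enorm_trajectories_eq (t : R) : 0 <= t -> enorm (Y1 t) = enorm (Y2 t).
Proof.
  intros Ht.
  pose proof (trajectory_nonzero U x1 Y1 V1 newton1 0 (Rle_refl 0)) as Hx1.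
  destruct newton1 as [HY0 _]. rewrite HY0 in Hx1.
  apply (arrival_time_inj U g h (enorm x1) U_derive (enorm_pos _ Hx1) g_pos outward_force).
  - exact (enorm_trajectory_ge U g h x1 Y1 V1 U_derive newton1 radial_init1 angular_init1
             g_pos outward_force t Ht).
  - rewrite same_radius.
    exact (enorm_trajectory_ge U g h x2 Y2 V2 U_derive newton2 radial_init2 angular_init2
             g_pos2 outward_force2 t Ht).
  - rewrite (arrival_time_trajectory U g h x1 Y1 V1 U_derive newton1 radial_init1 angular_init1
               g_pos outward_force t Ht), same_radius.
    rewrite (arrival_time_trajectory U g h x2 Y2 V2 U_derive newton2 radial_init2 angular_init2
               g_pos2 outward_force2 t Ht).
    reflexivity.
Qed.

Lemma dot_ratio_const (t : R) : 0 <= t ->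
  dot (Y1 t) (Y2 t) / dot (Y1 t) (Y1 t) = dot x1 x2 / dot x1 x1.
Proof.
  destruct newton1 as [HY10 [Hnz1 [Hder1 [HcY1 HcV1]]]].
  destruct newton2 as [HY20 [Hnz2 [Hder2 [HcY2 HcV2]]]].
  assert (HQ : forall u, 0 <= u -> 0 < dot (Y1 u) (Y1 u)) by (intros u Hu; apply dot_self_pos, Hnz1, Hu).
  rewrite <- HY10, <- HY20.
  apply (const_nonneg (fun u => dot (Y1 u) (Y2 u) / dot (Y1 u) (Y1 u)) (fun _ => 0)); [| |reflexivity].
  - intros u Hu. destruct (Hder1 u Hu) as [HY1 _]. destruct (Hder2 u Hu) as [HY2 _].
    assert (Hr : dot (Y1 u) (Y1 u) = dot (Y2 u) (Y2 u))
      by (rewrite <- !enorm_sq, enorm_trajectories_eq by lra; reflexivity).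
    assert (Hdot : dot (Y1 u) (V1 u) = dot (Y2 u) (V2 u)).
    { rewrite (dot_trajectory U g h x1 Y1 V1 U_derive newton1 radial_init1 angular_init1
                 g_pos outward_force u ltac:(lra)),
              (dot_trajectory U g h x2 Y2 V2 U_derive newton2 radial_init2 angular_init2
                 g_pos2 outward_force2 u ltac:(lra)),
              enorm_trajectories_eq, same_radius by lra.
      reflexivity. }
    assert (Hcross : cross (Y1 u) (V1 u) = cross (Y2 u) (V2 u)).
    { rewrite (cross_trajectory U h x1 Y1 V1 newton1 angular_init1 u ltac:(lra)),
              (cross_trajectory U h x2 Y2 V2 newton2 angular_init2 u ltac:(lra)), same_radius.
      reflexivity. }
    pose proof (HQ u ltac:(lra)).
    eapply is_derive_eq.
    + apply is_derive_div; [apply (is_derive_dot Y1 Y2 u _ _ HY1 HY2)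
                           |apply (is_derive_dot_self U x1 Y1 V1 newton1 u Hu)|lra].
    + rewrite co_rotating_identity by assumption. field. lra.
  - unfold Rdiv. apply filterlim_Rmult.
    + unfold dot. solve_filterlim.
    + apply (filterlim_Rcomp (fun u => dot (Y1 u) (Y1 u)) Rinv).
      * unfold dot. solve_filterlim.
      * apply continuous_Rinv, Rgt_not_eq, HQ. lra.
Qed.

Lemma same_radius_collision (t : R) : 0 <= t -> Y1 t = Y2 t -> x1 = x2.
Proof.
  intros Ht Hcol.
  pose proof (dot_ratio_const t Ht) as Hratio. rewrite Hcol, Rdiv_diag in Hratio
    by (apply Rgt_not_eq, dot_self_pos, (trajectory_nonzero U x2 Y2 V2 newton2 t Ht)).
  assert (Hx1 : 0 < dot x1 x1).
  { apply dot_self_pos. destruct newton1 as [HY0 [Hnz _]]. rewrite <- HY0. apply Hnz. lra. }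
  apply pt_eq_of_dot.
  - rewrite <- !enorm_sq, same_radius. reflexivity.
  - apply (Rmult_eq_reg_r (/ dot x1 x1)); [|apply Rgt_not_eq, Rinv_0_lt_compat, Hx1].
    rewrite Rinv_r by lra. symmetry. exact Hratio.
Qed.

End SameInitialRadius.

Section DistinctInitialRadii.

Variables (U g h : R -> R) (a b : pt) (Ya Va Yb Vb : R -> pt).
Hypothesis U_derive : forall r, 0 < r -> ex_derive U r.
Hypothesis newton_a : solves_newton U Ya Va a.
Hypothesis newton_b : solves_newton U Yb Vb b.
Hypothesis radial_init_a : radial_vel a (Va 0) = g (enorm a).
Hypothesis angular_init_a : angular_vel a (Va 0) = h (enorm a).
Hypothesis radial_init_b : radial_vel b (Vb 0) = g (enorm b).
Hypothesis angular_init_b : angular_vel b (Vb 0) = h (enorm b).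
Hypothesis radii_lt : 0 < enorm a < enorm b.
Hypothesis g_pos : forall s, enorm a <= s <= enorm b -> 0 < g s.
Hypothesis outward_force : forall s r, enorm a <= s <= enorm b -> s <= r ->
  0 <= - Derive U r + Mfun h s ^ 2 / r ^ 3.
Hypothesis integral_condition : forall s z, enorm a <= s <= enorm b -> s < z ->
  (forall w, s <= w <= z -> ex_derive (fun s' => integrand U g h w s') s) /\
  ex_RInt (fun w => Derive (fun s' => integrand U g h w s') s) s z /\
  RInt (fun w => Derive (fun s' => integrand U g h w s') s) s z < / g s.

Lemma distinct_radii_no_collision (t : R) : 0 <= t -> Ya t <> Yb t.
Proof.
  intros Ht Hcol.
  assert (Ha : enorm a <= enorm a <= enorm b) by lra.
  assert (Hb : enorm a <= enorm b <= enorm b) by lra.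
  destruct (Req_dec t 0) as [->|Ht0].
  { destruct newton_a as [Ha0 _], newton_b as [Hb0 _].
    assert (enorm a = enorm b) by congruence. lra. }
  pose proof (enorm_trajectory_gt U g h b Yb Vb U_derive newton_b radial_init_b angular_init_b
    (g_pos _ Hb) (fun r => outward_force _ r Hb) t ltac:(lra)) as Hbt.
  pose proof (arrival_time_trajectory U g h a Ya Va U_derive newton_a radial_init_a angular_init_a
    (g_pos _ Ha) (fun r => outward_force _ r Ha) t Ht) as HTa.
  pose proof (arrival_time_trajectory U g h b Yb Vb U_derive newton_b radial_init_b angular_init_b
    (g_pos _ Hb) (fun r => outward_force _ r Hb) t Ht) as HTb.
  rewrite Hcol in HTa.
  pose proof (arrival_time_decreasing U g h (enorm a) (enorm b) (enorm (Yb t)) U_derive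
    ltac:(lra) ltac:(lra) Hbt g_pos outward_force
    (fun s Hs => integral_condition s (enorm (Yb t)) Hs ltac:(lra))).
  lra.
Qed.

End DistinctInitialRadii.

Theorem theorem7
  (L : pt -> Prop) (R1 R2 : R) (U g h : R -> R) (y vel : R -> pt -> pt)
  (HR : 0 < R1 < R2)
  (HLdom : admissible_domain L)
  (HLbd : bounded2 L)
  (HL0 : ~ L (0, 0))
  (HLann : forall x, L x -> R1 < enorm x < R2)
  (HU : smooth_pos U)
  (Hsol : forall x, L x -> solves_newton U (fun t => y t x) (fun t => vel t x) x)
  (Hdr : forall x, L x -> radial_vel x (vel 0 x) = g (enorm x))
  (Hg : forall x, L x -> 0 < g (enorm x))
  (Hdphi : forall x, L x -> angular_vel x (vel 0 x) = h (enorm x))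
  (HM : forall r1 r2, R1 < r1 -> r1 <= r2 ->
          0 <= - Derive U r2 + Mfun h r1 ^ 2 / r2 ^ 3)
  (Hint : forall r1 r2, R1 < r1 < R2 -> r1 < r2 ->
          (forall z, r1 <= z <= r2 -> ex_derive (fun s => integrand U g h z s) r1) /\
          ex_RInt (fun z => Derive (fun s => integrand U g h z s) r1) r1 r2 /\
          RInt (fun z => Derive (fun s => integrand U g h z s) r1) r1 r2 < / g r1) :
  forall t x1 x2, 0 <= t -> L x1 -> L x2 -> x1 <> x2 -> y t x1 <> y t x2.
Proof.
  (* [HLbd] and [HL0] are consequences of [HLann]. *)
  intros t x1 x2 Ht Hx1 Hx2 Hne Hcol.
  assert (HU1 : forall r, 0 < r -> ex_derive U r) by (intros r Hr; exact (HU 1%nat r Hr)).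
  assert (Hdistinct : forall a b, L a -> L b -> enorm a < enorm b -> y t a <> y t b).
  { intros a b Ha Hb Hab. pose proof (HLann a Ha). pose proof (HLann b Hb).
    apply (distinct_radii_no_collision U g h a b _ _ _ _ HU1 (Hsol a Ha) (Hsol b Hb)
      (Hdr a Ha) (Hdphi a Ha) (Hdr b Hb) (Hdphi b Hb)); [lra| | | |exact Ht].
    - intros s Hs. destruct (admissible_domain_radii L HLdom a b s Ha Hb Hs) as [p [Hp <-]].
      apply Hg, Hp.
    - intros s r Hs Hr. apply HM; lra.
    - intros s z Hs Hz. apply Hint; lra. }
  destruct (Rtotal_order (enorm x1) (enorm x2)) as [Hlt|[Heq|Hgt]].
  - exact (Hdistinct x1 x2 Hx1 Hx2 Hlt Hcol).
  - apply Hne, (same_radius_collision U g h x1 x2 _ _ _ _ HU1 (Hsol x1 Hx1) (Hsol x2 Hx2)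
      (Hdr x1 Hx1) (Hdphi x1 Hx1) (Hdr x2 Hx2) (Hdphi x2 Hx2) Heq (Hg x1 Hx1)) with t;
      [intros r Hr; apply HM; [apply HLann, Hx1|exact Hr]|exact Ht|exact Hcol].
  - exact (Hdistinct x2 x1 Hx2 Hx1 Hgt (eq_sym Hcol)).
Qed.
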